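(* Let $V$ be a finite-dimensional irreducible $T$-module. Let $r,\delta,t,\delta^*$ be the nonnegative integers with $r+\delta\le d$, $t+\delta^*\le d$ such that for $0\le i\le d$: $e^*_iV\ne0$ if and only if $r\le i\le r+\delta$, and $e_iV\ne0$ if and only if $t\le i\le t+\delta^*$. Then $\delta=\delta^*$, and the sequence $(a;\{e_i\}_{i=t}^{t+\delta};a^*;\{e^*_i\}_{i=r}^{r+\delta})$ acts on $V$ as a tridiagonal system.
   Context: $\mathbb{F}$ is a field, $d\ge0$, and $\{\theta_i\}_{i=0}^d$, $\{\theta^*_i\}_{i=0}^d$ are scalars in $\mathbb{F}$ with $\theta_i\ne\theta_j$, $\theta^*_i\ne\theta^*_j$ for $i\ne j$, such that $\frac{\theta_{i-2}-\theta_{i+1}}{\theta_{i-1}-\theta_i}$ and $\frac{\theta^*_{i-2}-\theta^*_{i+1}}{\theta^*_{i-1}-\theta^*_i}$ are equal and independent of $i$ for $2\le i\le d-1$. $T$ is the associative $\mathbb{F}$-algebra with $1$ generated by $a,e_0,\dots,e_d,a^*,e^*_0,\dots,e^*_d$ with relations $e_ie_j=\delta_{ij}e_i$, $e^*_ie^*_j=\delta_{ij}e^*_i$, $\sum_ie_i=\sum_ie^*_i=1$, $a=\sum_i\theta_ie_i$, $a^*=\sum_i\theta^*_ie^*_i$, and $e^*_ia^ke^*_j=0$, $e_i{a^*}^ke_j=0$ whenever $0\le i,j,k\le d$ and $k<|i-j|$. (The integers $r,\delta,t,\delta^*$ exist by a preceding lemma.) A tridiagonal pair on a finite-dimensional nonzero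 space $V$ is a pair of diagonalizable linear maps $A,A^*$ such that some ordering $V_0,\dots,V_d$ of the eigenspaces of $A$ satisfies $A^*V_i\subseteq V_{i-1}+V_i+V_{i+1}$, some ordering $V^*_0,\dots,V^*_\delta$ of eigenspaces of $A^*$ satisfies $AV^*_i\subseteq V^*_{i-1}+V^*_i+V^*_{i+1}$ (out-of-range terms zero), and no subspace $W\ne0,V$ is invariant under both; such orderings are standard. A tridiagonal system $(A;\{E_i\};A^*;\{E^*_i\})$ consists of a tridiagonal pair together with standard orderings of the primitive idempotents (projections onto eigenspaces along the others) of $A$ and of $A^*$. *)

From HB Require Import structures.
From mathcomp Require Import all_boot all_order all_algebra.
Set Implicit Arguments. Unset Strict Implicit. Unset Printing Implicit Defensive.
Import Order.TTheory GRing.Theory Num.Theory.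
Local Open Scope ring_scope.

Definition lpow (F : fieldType) (V : vectType F) (f : 'End(V)) (k : nat) : 'End(V) :=
  iter k (fun g => (f \o g)%VF) \1%VF.

(* A T-module structure on a (finite-dimensional) vector space V is given by
   the images of the generators a, e_0..e_d, a*, e*_0..e*_d satisfying the
   defining relations of T (universal property of the presented algebra).
   Composition (f \o g) is the action of the product (image of f g). *)
Definition T_module (F : fieldType) (d : nat) (th ths : nat -> F)
    (V : vectType F) (a : 'End(V)) (e : nat -> 'End(V))
    (as_ : 'End(V)) (es : nat -> 'End(V)) : Prop :=
  [/\ forall i j, (i <= d)%N -> (j <= d)%N ->
        (e i \o e j)%VF = (if i == j then e i else 0),
      forall i j, (i <= d)%N -> (j <= d)%N ->
        (es i \o es j)%VF = (if i == j then es i else 0),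
      \sum_(i < d.+1) e i = \1%VF /\ \sum_(i < d.+1) es i = \1%VF,
      a = \sum_(i < d.+1) th i *: e i /\ as_ = \sum_(i < d.+1) ths i *: es i &
      forall i j k, (i <= d)%N -> (j <= d)%N -> (k <= d)%N ->
        (k < `|(i:int) - (j:int)|)%N ->
        (es i \o lpow a k \o es j)%VF = 0 /\ (e i \o lpow as_ k \o e j)%VF = 0].

Definition T_irreducible (F : fieldType) (d : nat) (V : vectType F)
    (a : 'End(V)) (e : nat -> 'End(V)) (as_ : 'End(V)) (es : nat -> 'End(V)) : Prop :=
  (fullv : {vspace V}) != 0%VS /\
  forall W : {vspace V},
    (a @: W <= W)%VS -> (as_ @: W <= W)%VS ->
    (forall i, (i <= d)%N -> (e i @: W <= W)%VS) ->
    (forall i, (i <= d)%N -> (es i @: W <= W)%VS) ->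
    W = 0%VS \/ W = fullv.

Definition primitive_idempotents (F : fieldType) (V : vectType F)
    (A : 'End(V)) (E : nat -> 'End(V)) (D : nat) : Prop :=
  exists th : nat -> F,
  [/\ forall i j, (i <= D)%N -> (j <= D)%N -> th i = th j -> i = j,
      forall i, (i <= D)%N -> passmx.leigenspace A (th i) != 0%VS,
      (\sum_(i < D.+1) passmx.leigenspace A (th i))%VS = fullv &
      forall i j v, (i <= D)%N -> (j <= D)%N -> v \in passmx.leigenspace A (th j) ->
        E i v = (if i == j then v else 0)].

Definition tridiagonal_system (F : fieldType) (V : vectType F)
    (A : 'End(V)) (E : nat -> 'End(V)) (As : 'End(V)) (Es : nat -> 'End(V))
    (D Ds : nat) : Prop :=
  [/\ (fullv : {vspace V}) != 0%VS,
      primitive_idempotents A E D /\ primitive_idempotents As Es Ds,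
      forall i, (i <= D)%N ->
        (As @: limg (E i) <=
           \sum_(j < D.+1 | (i <= j.+1)%N && (j <= i.+1)%N) limg (E j))%VS,
      forall i, (i <= Ds)%N ->
        (A @: limg (Es i) <=
           \sum_(j < Ds.+1 | (i <= j.+1)%N && (j <= i.+1)%N) limg (Es j))%VS &
      forall W : {vspace V}, (A @: W <= W)%VS -> (As @: W <= W)%VS ->
        W = 0%VS \/ W = fullv].

From HB Require Import structures.
From mathcomp Require Import all_boot all_order all_algebra.
From mathcomp Require Import zify ring.
Set Implicit Arguments. Unset Strict Implicit. Unset Printing Implicit Defensive.
Import Order.TTheory GRing.Theory Num.Theory.
Local Open Scope ring_scope.

(* The relations of [T] make [e 0 .. e d] (resp. [es 0 .. es d]) the spectral
   idempotents of [a] (resp. [as_]), with [as_] acting tridiagonally on the [e i]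
   and [a] on the [es i]. Put
     U k = (es 0 + .. + es (r + k)) V  :&:  (e (t + k) + .. + e d) V.
   Then (a - th (t + k)) U k <= U (k + 1) and (as_ - ths (r + k)) U k <= U (k - 1),
   so the sum of the [U k] is a nonzero submodule, hence all of V. As [e j] vanishes
   beyond [t + deltas], U k = 0 for k > deltas, so [es j] vanishes beyond
   [r + deltas]: delta <= deltas, and equality follows by symmetry. A subspace
   invariant under [a] is invariant under every [e i] (a polynomial in [a]), so
   irreducibility under [a], [as_] alone follows from irreducibility as a [T]-module. *)

Lemma limg_eq0 (F : fieldType) (U V : vectType F) (f : 'Hom(U, V)) :
  (limg f == 0%VS) = (f == 0).
Proof.
apply/eqP/eqP => [f0|->]; last exact: lim0g.
apply/lfunP => v; rewrite zero_lfunE; apply/eqP.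
by rewrite -memv0 -f0 memv_img ?memvf.
Qed.

Lemma sum_ord_support1 (G : zmodType) (n j : nat) (g : nat -> G) : (j <= n)%N ->
  (forall i, (i <= n)%N -> i != j -> g i = 0) -> \sum_(i < n.+1) g i = g j.
Proof.
move=> jn g0; rewrite (bigD1 (Ordinal (jn : (j < n.+1)%N))) //= big1 ?addr0 // => i ij.
by apply: g0; [rewrite -ltnS |].
Qed.

Lemma sum_ord_window (G : zmodType) (n t D : nat) (g : nat -> G) : (t + D <= n)%N ->
  (forall m, (m <= n)%N -> (m < t)%N || (t + D < m)%N -> g m = 0) ->
  \sum_(m < n.+1) g m = \sum_(i < D.+1) g (t + i)%N.
Proof.
move=> tDn g0; rewrite -(big_mkord xpredT g) (@big_cat_nat _ _ _ t) //=; last by lia.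
rewrite big_nat_cond big1 ?add0r; last by move=> m /andP[/andP[_ mt] _]; apply: g0; lia.
rewrite (@big_cat_nat _ _ _ (t + D.+1)) /=; [|lia|lia].
rewrite [X in _ + X]big_nat_cond [X in _ + X]big1 ?addr0; last first.
  by move=> m /andP[/andP[tm mn] _]; apply: g0; lia.
rewrite -{1}(add0n t) big_addn (addKn t) big_mkord.
by apply: eq_bigr => i _; rewrite addnC.
Qed.

Section Spectral.

Variables (F : fieldType) (V : vectType F) (d : nat).

Definition spectral_decomposition (a : 'End(V)) (e : nat -> 'End(V)) (th : nat -> F) :=
  [/\ forall i j v, (i <= d)%N -> (j <= d)%N -> e i (e j v) = if i == j then e i v else 0,
      forall v, \sum_(i < d.+1) e i v = v,
      forall j v, (j <= d)%N -> a (e j v) = th j *: e j v &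
      forall j v, (j <= d)%N -> e j (a v) = th j *: e j v].

Definition tridiagonal (e : nat -> 'End(V)) (b : 'End(V)) :=
  forall i j v, (i <= d)%N -> (j <= d)%N -> (i.+1 < j)%N || (j.+1 < i)%N ->
    e i (b (e j v)) = 0.

Lemma spectral_decompositionP (a : 'End(V)) (e : nat -> 'End(V)) (th : nat -> F) :
  (forall i j, (i <= d)%N -> (j <= d)%N -> (e i \o e j)%VF = if i == j then e i else 0) ->
  \sum_(i < d.+1) e i = \1%VF -> a = \sum_(i < d.+1) th i *: e i ->
  spectral_decomposition a e th.
Proof.
move=> e_orth e_sum ->.
have orth i j v : (i <= d)%N -> (j <= d)%N -> e i (e j v) = if i == j then e i v else 0.
  by move=> id jd; rewrite -comp_lfunE e_orth //; case: eqP => // _; rewrite zero_lfunE.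
split => // [v|j v jd|j v jd]; first by rewrite -sum_lfunE e_sum id_lfunE.
- rewrite sum_lfunE (@sum_ord_support1 _ d j (fun i => (th i *: e i) (e j v))) //.
    by rewrite scale_lfunE orth // eqxx.
  by move=> i id ij; rewrite scale_lfunE orth // (negbTE ij) scaler0.
- rewrite sum_lfunE linear_sum (@sum_ord_support1 _ d j (fun i => e j ((th i *: e i) v))) //.
    by rewrite scale_lfunE linearZ /= orth // eqxx.
  by move=> i id ij; rewrite scale_lfunE linearZ /= orth // eq_sym (negbTE ij) scaler0.
Qed.

Variables (a : 'End(V)) (e : nat -> 'End(V)) (th : nat -> F).
Hypothesis Se : spectral_decomposition a e th.

Lemma spectral_eq0 (w : V) : (forall j, (j <= d)%N -> e j w = 0) -> w = 0.
Proof.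
case: Se => _ e_sum _ _ ew0.
by rewrite -(e_sum w) big1 // => j _; apply: ew0; rewrite -ltnS.
Qed.

Lemma mem_lker_spectral_sum (P : pred nat) (x : V) :
  x \in lker (\sum_(j < d.+1 | P j) e j) <-> forall j, (j <= d)%N -> P j -> e j x = 0.
Proof.
case: Se => e_orth _ _ _; rewrite memv_ker sum_lfunE; split => [/eqP sum0 j jd Pj|ex0].
  move: (congr1 (e j) sum0); rewrite linear0 linear_sum /=.
  rewrite (bigD1 (Ordinal (jd : (j < d.+1)%N))) //= e_orth // eqxx big1 ?addr0 //.
  move=> i /andP[_ ij]; rewrite e_orth //; last by rewrite -ltnS.
  by case: eqP => // ji; move: ij; rewrite -val_eqE /= ji eqxx.
by apply/eqP; rewrite big1 // => j Pj; apply: ex0; rewrite // -ltnS.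
Qed.

Lemma spectral_leigenspace j w : (j <= d)%N -> e j w \in passmx.leigenspace a (th j).
Proof.
case: Se => _ _ a_e _ jd.
by rewrite memv_ker add_lfunE opp_lfunE scale_lfunE id_lfunE a_e // subrr.
Qed.

Hypothesis th_inj : forall i j, (i <= d)%N -> (j <= d)%N -> th i = th j -> i = j.

Lemma spectral_on_leigenspace j v m : (j <= d)%N -> (m <= d)%N ->
  v \in passmx.leigenspace a (th j) -> e m v = if m == j then v else 0.
Proof.
case: Se => _ e_sum _ e_a jd md.
rewrite memv_ker add_lfunE opp_lfunE scale_lfunE id_lfunE subr_eq0 => /eqP av.
have ev0 i : (i <= d)%N -> i != j -> e i v = 0.
  move=> id ij; apply/eqP; move: (e_a i v id); rewrite av linearZ /= => /eqP.
  rewrite -subr_eq0 -scalerBl scaler_eq0 subr_eq0 => /orP[/eqP thji|//].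
  by rewrite (th_inj jd id thji) eqxx in ij.
case: eqP => [->|/eqP mj]; last exact: ev0.
by rewrite -{2}(e_sum v) (@sum_ord_support1 _ d j (fun i => e i v)).
Qed.

(* [e i] is the Lagrange polynomial [prod_(j != i) (a - th j) / (th i - th j)] in [a]. *)
Lemma spectral_invariant (W : {vspace V}) :
  (a @: W <= W)%VS -> forall i, (i <= d)%N -> (e i @: W <= W)%VS.
Proof.
case: Se => _ e_sum a_e _ aW i id.
pose q (s : seq nat) := foldr (fun j g => ((a - th j *: \1) \o g)%VF) \1%VF s.
have qW s w : w \in W -> q s w \in W.
  elim: s w => [|j s IH] w wW /=; first by rewrite id_lfunE.
  rewrite comp_lfunE add_lfunE opp_lfunE scale_lfunE id_lfunE.
  by apply: memvB; [apply: (subvP aW); apply: memv_img | apply: memvZ]; apply: IH.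
have q_e s m v : (m <= d)%N -> q s (e m v) = (\prod_(j <- s) (th m - th j)) *: e m v.
  move=> md; elim: s => [|j s IH] /=; first by rewrite id_lfunE big_nil scale1r.
  rewrite comp_lfunE add_lfunE opp_lfunE scale_lfunE id_lfunE IH big_cons.
  by rewrite linearZ /= a_e // !scalerA -scalerBl; congr (_ *: _); ring.
pose s := [seq j <- iota 0 d.+1 | j != i].
have q_ei w : q s w = (\prod_(j <- s) (th i - th j)) *: e i w.
  rewrite -{1}(e_sum w) linear_sum /=.
  rewrite (@sum_ord_support1 _ d i (fun m => q s (e m w))) ?q_e // => m md mi.
  rewrite q_e //; apply/eqP; rewrite scaler_eq0 prodf_seq_eq0; apply/orP; left.
  apply/hasP; exists m => /=; last by rewrite subrr eqxx.
  by rewrite mem_filter mem_iota mi /= add0n ltnS md.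
have prod_neq0 : \prod_(j <- s) (th i - th j) != 0.
  rewrite prodf_seq_neq0; apply/allP => j; rewrite mem_filter mem_iota add0n ltnS.
  move=> /andP[ji /andP[_ jd]] /=; rewrite subr_eq0; apply: contra ji => /eqP thij.
  by rewrite (th_inj id jd thij).
apply/subvP => _ /memv_imgP [w wW ->].
rewrite -[e i w]scale1r -(mulVf prod_neq0) -scalerA -q_ei.
by apply: memvZ; apply: qW.
Qed.

Section Window.

Variables (t D : nat).
Hypothesis tDd : (t + D <= d)%N.
Hypothesis e_out : forall m, (m <= d)%N -> (m < t)%N || (t + D < m)%N -> e m = 0.

Lemma tridiagonal_window (b : 'End(V)) i : tridiagonal e b -> (i <= D)%N ->
  (b @: limg (e (t + i)%N) <=
     \sum_(j < D.+1 | (i <= j.+1)%N && (j <= i.+1)%N) limg (e (t + j)%N))%VS.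
Proof.
case: Se => _ e_sum _ _ Teb iD.
apply/subvP => _ /memv_imgP [_ /memv_imgP [z _ ->] ->].
set x := b _; rewrite -(e_sum x).
rewrite (@sum_ord_window _ d t D (fun m => e m x)) // => [|m md mt]; last first.
  by rewrite e_out ?zero_lfunE.
rewrite (bigID (fun j : 'I_D.+1 => (i <= j.+1)%N && (j <= i.+1)%N)) /=.
rewrite [X in _ + X]big1 ?addr0 => [|j ij]; last by apply: Teb; have := ltn_ord j; lia.
by apply: memv_sumr => j _; apply: memv_img; apply: memvf.
Qed.

Lemma primitive_idempotents_window : (forall i, (i <= D)%N -> e (t + i)%N != 0) ->
  primitive_idempotents a (fun i => e (t + i)%N) D.
Proof.
case: Se => _ e_sum _ _ e_in; exists (fun i => th (t + i)%N); split.
- by move=> i j iD jD /th_inj; lia.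
- move=> i iD; apply: contraNneq (e_in i iD) => eig0.
  rewrite -limg_eq0 -subv0 -eig0; apply/subvP => _ /memv_imgP [w _ ->].
  by apply: spectral_leigenspace; lia.
- apply/eqP; rewrite eqEsubv subvf /=; apply/subvP => v _.
  rewrite -(e_sum v) (@sum_ord_window _ d t D (fun m => e m v)) // => [|m md mt].
    by apply: memv_sumr => i _; apply: spectral_leigenspace; have := ltn_ord i; lia.
  by rewrite e_out ?zero_lfunE.
- move=> i j v iD jD vj; rewrite (@spectral_on_leigenspace (t + j)) //; try lia.
  by rewrite eqn_add2l.
Qed.

End Window.

End Spectral.

Section SplitDecomposition.

Variables (F : fieldType) (V : vectType F) (d : nat).
Variables (a b : 'End(V)) (e f : nat -> 'End(V)) (th ths : nat -> F) (t r : nat).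
Hypotheses (Se : spectral_decomposition d a e th) (Sf : spectral_decomposition d b f ths).
Hypotheses (Tfa : tridiagonal d f a) (Teb : tridiagonal d e b).
Hypothesis e_lt : forall j, (j < t)%N -> e j = 0.

Definition split_space k : {vspace V} :=
  (lker (\sum_(j < d.+1 | (r + k < j)%N) f j)%R :&:
   lker (\sum_(j < d.+1 | (j < t + k)%N) e j)%R)%VS.

Lemma mem_split_space k x : x \in split_space k <->
  (forall j, (j <= d)%N -> (r + k < j)%N -> f j x = 0) /\
  (forall j, (j <= d)%N -> (j < t + k)%N -> e j x = 0).
Proof.
rewrite memv_cap -(mem_lker_spectral_sum Sf) -(mem_lker_spectral_sum Se).
by split=> [/andP[]|[]] *; [split | apply/andP].
Qed.

Definition split_sum := (\sum_(k < d.+1) split_space k)%VS.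

Lemma split_space_sub_sum k x : x \in split_space k -> x \in split_sum.
Proof.
case: (leqP k d) => [kd|dk xk].
  exact/subvP/(sumv_sup (Ordinal (kd : (k < d.+1)%N))).
suff -> : x = 0 by rewrite mem0v.
have /mem_split_space [_ ex] := xk.
by apply: (spectral_eq0 Se) => j jd; apply: ex; lia.
Qed.

Lemma split_space_raise k u :
  u \in split_space k -> a u - th (t + k) *: u \in split_space k.+1.
Proof.
case: Se Sf => _ _ _ e_a [_ f_sum _ _] /mem_split_space [fu eu].
apply/mem_split_space; split => j jd jk; rewrite linearB linearZ /=.
- rewrite (fu j jd) ?scaler0 ?subr0; last by lia.
  rewrite -(f_sum u) !linear_sum big1 //= => m _.
  case: (ltnP (r + k) m) => [km|mk]; first by rewrite (fu m) ?linear0 // -ltnS.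
  by move: (ltn_ord m) => md; apply: Tfa; lia.
- rewrite e_a //; case: (ltnP j (t + k)) => [jtk|tkj]; first by rewrite eu // !scaler0 subrr.
  have -> : j = (t + k)%N by lia.
  by rewrite subrr.
Qed.

Lemma split_space_lower k u :
  u \in split_space k -> b u - ths (r + k) *: u \in split_space k.-1.
Proof.
case: Se Sf => _ e_sum _ _ [_ _ _ f_b] /mem_split_space [fu eu].
apply/mem_split_space; split => j jd jk; rewrite linearB linearZ /=.
- rewrite f_b //; case: (ltnP (r + k) j) => [kj|jk']; first by rewrite fu // !scaler0 subrr.
  have -> : j = (r + k)%N by lia.
  by rewrite subrr.
- case: (ltnP j t) => [jt|tj]; first by rewrite e_lt // !zero_lfunE scaler0 subr0.
  rewrite (eu j jd) ?scaler0 ?subr0; last by lia.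
  rewrite -(e_sum u) !linear_sum big1 //= => m _.
  case: (ltnP m (t + k)) => [mk|km]; first by rewrite (eu m) ?linear0 // -ltnS.
  by move: (ltn_ord m) => md; apply: Teb; lia.
Qed.

Lemma split_sum_invariant (g : 'End(V)) (c : nat -> F) :
  (forall k u, u \in split_space k -> g u - c k *: u \in split_sum) ->
  (g @: split_sum <= split_sum)%VS.
Proof.
move=> gU; rewrite limg_sum; apply/subv_sumP => k _.
apply/subvP => _ /memv_imgP [u uk ->].
rewrite -(subrK (c k *: u) (g u)); apply: memvD; first exact: gU.
by apply: memvZ; exact: split_space_sub_sum uk.
Qed.

Hypothesis irr : forall W : {vspace V},
  (a @: W <= W)%VS -> (b @: W <= W)%VS -> W = 0%VS \/ W = fullv.
Hypothesis f_r : f r != 0.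

Lemma split_sum_full : split_sum = fullv.
Proof.
have aW : (a @: split_sum <= split_sum)%VS.
  apply: (split_sum_invariant (c := fun k => th (t + k))) => k u.
  by move/split_space_raise/split_space_sub_sum.
have bW : (b @: split_sum <= split_sum)%VS.
  apply: (split_sum_invariant (c := fun k => ths (r + k))) => k u.
  by move/split_space_lower/split_space_sub_sum.
case: (irr aW bW) => // W0.
have fr_U0 v : f r v \in split_space 0.
  case: Sf => f_orth _ _ _; apply/mem_split_space; split => j jd jr.
    by rewrite f_orth ?ifF //; [apply/eqP | ]; lia.
  by rewrite e_lt ?zero_lfunE //; lia.
case/negP: f_r; rewrite -limg_eq0 -subv0 -W0; apply/subvP => _ /memv_imgP [v _ ->].
exact/split_space_sub_sum/fr_U0.
Qed.

Lemma spectral_support_bound (D : nat) :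
  (forall j, (j <= d)%N -> (t + D < j)%N -> e j = 0) ->
  forall j, (j <= d)%N -> (r + D < j)%N -> f j = 0.
Proof.
move=> e_gt j jd jD; apply/lfunP => v; rewrite zero_lfunE.
have /memv_sumP [u uU ->] : v \in split_sum by rewrite split_sum_full memvf.
rewrite linear_sum big1 // => k _; have /mem_split_space [fu eu] := uU k isT.
case: (leqP k D) => [kD|Dk]; first by apply: fu; lia.
suff -> : u k = 0 by rewrite linear0.
apply: (spectral_eq0 Se) => m md; case: (ltnP (t + D) m) => [Dm|mD].
  by rewrite e_gt ?zero_lfunE.
by apply: eu; lia.
Qed.

End SplitDecomposition.

Section WindowSupport.

Variables (F : fieldType) (V : vectType F) (d t D : nat) (e : nat -> 'End(V)).
Hypothesis e_supp : forall i, (i <= d)%N -> (limg (e i) != 0%VS) = (t <= i <= t + D)%N.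

Lemma window_support_out m : (m <= d)%N -> (m < t)%N || (t + D < m)%N -> e m = 0.
Proof.
by move=> md mt; apply/eqP; rewrite -limg_eq0; apply: negbNE; rewrite e_supp //; lia.
Qed.

Lemma window_support_in i : (t + D <= d)%N -> (i <= D)%N -> e (t + i)%N != 0.
Proof. by move=> tDd iD; rewrite -limg_eq0 e_supp //; lia. Qed.

End WindowSupport.

Lemma window_width_le (F : fieldType) (V : vectType F) (d : nat) (a b : 'End(V))
    (e f : nat -> 'End(V)) (th ths : nat -> F) (t r D Df : nat) :
  spectral_decomposition d a e th -> spectral_decomposition d b f ths ->
  tridiagonal d f a -> tridiagonal d e b ->
  (forall W : {vspace V}, (a @: W <= W)%VS -> (b @: W <= W)%VS -> W = 0%VS \/ W = fullv) ->
  (t + D <= d)%N -> (r + Df <= d)%N ->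
  (forall i, (i <= d)%N -> (limg (e i) != 0%VS) = (t <= i <= t + D)%N) ->
  (forall i, (i <= d)%N -> (limg (f i) != 0%VS) = (r <= i <= r + Df)%N) ->
  (Df <= D)%N.
Proof.
move=> Se Sf Tfa Teb irr tDd rDd e_supp f_supp; rewrite leqNgt; apply/negP => lt_D.
case/eqP: (window_support_in f_supp rDd (leqnn Df)).
have e_out := window_support_out e_supp.
have e_lt j : (j < t)%N -> e j = 0 by move=> jt; apply: e_out; lia.
have e_gt j : (j <= d)%N -> (t + D < j)%N -> e j = 0 by move=> jd jt; apply: e_out; lia.
have f_r : f r != 0 by rewrite -[r]addn0 (window_support_in f_supp).
by apply: (spectral_support_bound Se Sf Tfa Teb e_lt irr f_r e_gt); lia.
Qed.

Section T_module.

Variables (F : fieldType) (d : nat) (th ths : nat -> F) (V : vectType F).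
Variables (a as_ : 'End(V)) (e es : nat -> 'End(V)).
Hypothesis Hmod : T_module d th ths a e as_ es.

Lemma T_module_spectral :
  spectral_decomposition d a e th /\ spectral_decomposition d as_ es ths.
Proof.
case: Hmod => e_orth es_orth [e_sum es_sum] [a_e as_es] _.
by split; apply: spectral_decompositionP.
Qed.

Lemma T_module_tridiagonal : tridiagonal d es a /\ tridiagonal d e as_.
Proof.
case: Hmod => _ _ _ _ rel.
have rel1 i j : (i <= d)%N -> (j <= d)%N -> (i.+1 < j)%N || (j.+1 < i)%N ->
    (es i \o lpow a 1 \o es j)%VF = 0 /\ (e i \o lpow as_ 1 \o e j)%VF = 0.
  by move=> id jd ij; apply: rel => //; lia.
split=> i j v id jd ij; have [es_a_es e_as_e] := rel1 i j id jd ij.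
- by move/lfunP/(_ v): es_a_es; rewrite /lpow /= !comp_lfunE id_lfunE zero_lfunE.
- by move/lfunP/(_ v): e_as_e; rewrite /lpow /= !comp_lfunE id_lfunE zero_lfunE.
Qed.

Lemma T_irreducible_invariant
    (Hth : forall i j, (i <= d)%N -> (j <= d)%N -> th i = th j -> i = j)
    (Hths : forall i j, (i <= d)%N -> (j <= d)%N -> ths i = ths j -> i = j) :
  T_irreducible d a e as_ es -> forall W : {vspace V},
  (a @: W <= W)%VS -> (as_ @: W <= W)%VS -> W = 0%VS \/ W = fullv.
Proof.
have [Se Ses] := T_module_spectral.
case=> _ irr W aW asW; apply: irr => //.
- exact: spectral_invariant Se Hth W aW.
- exact: spectral_invariant Ses Hths W asW.
Qed.

End T_module.

Theorem proposition5p4 (F : fieldType) (d : nat) (th ths : nat -> F)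
  (Hth : forall i j, (i <= d)%N -> (j <= d)%N -> th i = th j -> i = j)
  (Hths : forall i j, (i <= d)%N -> (j <= d)%N -> ths i = ths j -> i = j)
  (Hbeta : exists beta : F, forall i, (2 <= i)%N -> (i <= d.-1)%N ->
      (th (i - 2)%N - th i.+1) / (th i.-1 - th i) = beta /\
      (ths (i - 2)%N - ths i.+1) / (ths i.-1 - ths i) = beta)
  (V : vectType F) (a : 'End(V)) (e : nat -> 'End(V))
  (as_ : 'End(V)) (es : nat -> 'End(V))
  (Hmod : T_module d th ths a e as_ es)
  (Hirr : T_irreducible d a e as_ es)
  (r delta t deltas : nat)
  (Hrd : (r + delta <= d)%N) (Htd : (t + deltas <= d)%N)
  (Hes : forall i, (i <= d)%N -> (limg (es i) != 0%VS) = (r <= i <= r + delta)%N)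
  (He : forall i, (i <= d)%N -> (limg (e i) != 0%VS) = (t <= i <= t + deltas)%N) :
  delta = deltas /\
  tridiagonal_system a (fun i => e (t + i)%N) as_ (fun i => es (r + i)%N) delta delta.
Proof.
have [Se Ses] := T_module_spectral Hmod.
have [Tesa Teas] := T_module_tridiagonal Hmod.
have irr := T_irreducible_invariant Hmod Hth Hths Hirr.
have e_out := window_support_out He; have es_out := window_support_out Hes.
have e_in := window_support_in He Htd; have es_in := window_support_in Hes Hrd.
have delta_eq : delta = deltas.
  apply/eqP; rewrite eqn_leq (window_width_le Se Ses Tesa Teas irr Htd Hrd He Hes).
  exact: window_width_le Ses Se Teas Tesa (fun W aW asW => irr W asW aW) Hrd Htd Hes He.
subst deltas; split => //; split.
- exact: Hirr.1.
- exact (conj (primitive_idempotents_window Se Hth Htd e_out e_in)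
               (primitive_idempotents_window Ses Hths Hrd es_out es_in)).
- move=> i; exact (tridiagonal_window Se Htd e_out Teas).
- move=> i; exact (tridiagonal_window Ses Hrd es_out Tesa).
- exact: irr.
Qed.
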